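(* Let $m>0$, $n\in\mathbb{R}$, and let $b:\mathbb{R}\to\mathbb{R}$ be periodic with period $m$ and Riemann-integrable on every bounded interval. If $u\in\mathbb{R}$ satisfies $\int_u^{u+m}b(x)\,dx\le n$, then there exists $x_1\in[u,u+m]$ such that for all $x_2\in[x_1,x_1+m]$, $$\int_{x_1}^{x_2}b(x)\,dx\le (x_2-x_1)\cdot\frac{n}{m}.$$ *)

From Stdlib Require Import Reals.
Open Scope R_scope.

Definition Rint (f : R -> R) (hf : forall a b : R, Riemann_integrable f a b)
  (a b : R) : R := RiemannInt (hf a b).

(* Let [c = n / m] and [F x = ∫_u^x b - (x - u) c].  Periodicity of [b] gives
   [F (x + m) = F x + ∫_u^(u+m) b - n <= F x], so a maximiser [x1] of the
   continuous [F] on [[u, u + m]] dominates [F] on the whole of [[x1, x1 + m]]: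
   points beyond [u + m] are compared with their translate by [-m].  The claim
   is exactly [F x2 <= F x1]. *)
From Stdlib Require Import Reals Lra.
From Coquelicot Require Import Coquelicot.
Open Scope R_scope.

Lemma Rint_RInt (f : R -> R) (hf : forall a b, Riemann_integrable f a b) (a b : R) :
  Rint f hf a b = RInt f a b.
Proof. unfold Rint; symmetry; apply RInt_Reals. Qed.

Lemma continuous_max_forward (F : R -> R) (m u : R) :
  0 < m -> (forall x, continuity_pt F x) -> (forall x, F (x + m) <= F x) ->
  exists x1, u <= x1 <= u + m /\ forall x2, x1 <= x2 <= x1 + m -> F x2 <= F x1.
Proof.
  intros hm hF hdec.
  destruct (continuity_ab_maj F u (u + m)) as [x1 [hmax hx1]];
    [lra | intros; apply hF |].
  exists x1; split; [exact hx1 |].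
  intros x2 hx2.
  destruct (Rle_dec x2 (u + m)) as [hle | hgt].
  - apply hmax; lra.
  - specialize (hdec (x2 - m)); replace (x2 - m + m) with x2 in hdec by ring.
    specialize (hmax (x2 - m) ltac:(lra)); lra.
Qed.

Section PeriodicIntegral.

Variables (f : R -> R) (m : R).
Hypothesis f_periodic : forall x, f (x + m) = f x.
Hypothesis f_integrable : forall a b, ex_RInt f a b.

Lemma RInt_Chasles_all (a b c : R) : RInt f a b + RInt f b c = RInt f a c.
Proof. apply (RInt_Chasles f); apply f_integrable. Qed.

Lemma RInt_shift_period (a c : R) : RInt f (a + m) (c + m) = RInt f a c.
Proof.
  pose proof (RInt_comp_lin f 1 m a c) as hlin; rewrite !Rmult_1_l in hlin.
  rewrite <- hlin by apply f_integrable.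
  apply RInt_ext; intros x _.
  rewrite f_periodic; unfold scal; simpl; unfold mult; simpl; now rewrite !Rmult_1_l.
Qed.

Lemma RInt_period_indep (x u : R) : RInt f x (x + m) = RInt f u (u + m).
Proof.
  rewrite <- (RInt_Chasles_all x (u + m) (x + m)),
          <- (RInt_Chasles_all u x (u + m)), RInt_shift_period.
  apply Rplus_comm.
Qed.

Lemma continuity_pt_RInt_upper (u x : R) : continuity_pt (fun y => RInt f u y) x.
Proof.
  apply continuity_pt_filterlim.
  apply (@continuous_RInt_1 R_NormedModule f u x (fun y => RInt f u y)).
  apply filter_forall; intros y.
  exact (@RInt_correct R_CompleteNormedModule f u y (f_integrable u y)).
Qed.

Lemma RInt_drift_step (c u x : R) :
  RInt f u (u + m) <= m * c ->
  RInt f u (x + m) - (x + m - u) * c <= RInt f u x - (x - u) * c.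
Proof.
  intros hu.
  rewrite <- (RInt_Chasles_all u x (x + m)), (RInt_period_indep x u); nra.
Qed.

End PeriodicIntegral.

Theorem mainTheorem14 (m n : R) (b : R -> R)
  (hm : 0 < m)
  (hper : forall x : R, b (x + m) = b x)
  (hint : forall c d : R, Riemann_integrable b c d)
  (u : R)
  (hu : Rint b hint u (u + m) <= n) :
  exists x1 : R, u <= x1 <= u + m /\
    forall x2 : R, x1 <= x2 <= x1 + m ->
      Rint b hint x1 x2 <= (x2 - x1) * (n / m).
Proof.
  assert (hex : forall c d, ex_RInt b c d) by (intros; apply ex_RInt_Reals_1, hint).
  set (F := fun x => RInt b u x - (x - u) * (n / m)).
  rewrite Rint_RInt in hu.
  destruct (continuous_max_forward F m u hm) as [x1 [hx1 hmax]].
  - intros x; apply continuity_pt_minus; [apply continuity_pt_RInt_upper, hex |].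
    apply continuity_pt_mult;
      [apply continuity_pt_minus; [apply continuity_pt_id | apply continuity_pt_const] |
       apply continuity_pt_const]; intros ? ?; reflexivity.
  - intros x; apply (RInt_drift_step b m hper hex).
    replace (m * (n / m)) with n by (field; lra); exact hu.
  - exists x1; split; [exact hx1 |].
    intros x2 hx2; specialize (hmax x2 hx2); unfold F in hmax.
    rewrite Rint_RInt, <- (RInt_Chasles_all b hex u x1 x2) in *; lra.
Qed.
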